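(* Consider the setting described in the context, for a family $(f^{(D)})_{D\ge1}$ of $(\alpha,\beta)$-class functions. Given $\epsilon,\delta>0$, there exist $\Delta$ and $N$ with $$\Delta=\Omega\big(\epsilon^{1+\frac1\beta}\big),\qquad N=O\Big(\epsilon^{-\frac{1}{2\beta}}\log\big(\epsilon^{-1}\delta^{-1}\big)\Big)$$ such that the following algorithm returns a subnetwork $\hat f$ of $\mathcal{S}[w^\ast_\lambda]$ whose hidden layer has at most $N$ nodes and which, with probability greater than $1-\delta$, satisfies $\sum_{\mathbf{x}}\hat p_{\mathrm{data}}(\mathbf{x})|\mathcal{S}[w^\ast_\lambda](\mathbf{x})-\hat f(\mathbf{x})|^2=O(\epsilon)$. The algorithm: draw $N$ independent samples $(\mathbf{a},b)$ from $p^\ast_{\lambda,\Delta}$, let $\hat{\mathbb{W}}$ be the set of sampled parameters, and set $\hat f(\mathbf{x})=\sum_{(\mathbf{a},b)\in\hat{\mathbb{W}}}\hat w^\ast(\mathbf{a},b)g((\mathbf{a}^\top\mathbf{x}-b)\bmod P)$, where the weights $\hat w^\ast$ on the sampled nodes are trained by convex optimization on the $M$ examples.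
   Context: $P$ is a fixed prime, $\mathbb{Z}_P=\{0,\dots,P-1\}$ with arithmetic mod $P$. $g:\mathbb{Z}_P\to\mathbb{R}$ is an activation function with $\sum_bg(b)=0$, $\sum_b|g(b)|^2=1$. For $w:\mathbb{Z}_P^D\times\mathbb{Z}_P\to\mathbb{R}$, $\mathcal{S}[w](\mathbf{x})=P^{-D/2}\sum_{\mathbf{a}\in\mathbb{Z}_P^D,b\in\mathbb{Z}_P}w(\mathbf{a},b)g((\mathbf{a}^\top\mathbf{x}-b)\bmod P)$; the node with parameter $(\mathbf{a},b)$ has weight $w(\mathbf{a},b)$. For each $D$, $f=f^{(D)}$ is an unknown function, and we are given $M$ examples $(\mathbf{x}_m,f(\mathbf{x}_m))$, $\mathbf{x}_m\in\mathbb{Z}_P^D$, with empirical distribution $\hat p_{\mathrm{data}}$. For $\lambda>0$, $w^\ast_\lambda=\arg\min_w\{\sum_{\mathbf{x}}\hat p_{\mathrm{data}}(\mathbf{x})|f(\mathbf{x})-\mathcal{S}[w](\mathbf{x})|^2+\lambda\sum_{\mathbf{a},b}|P^{-D/2}w(\mathbf{a},b)|^2\}$. Order all $P^{D+1}$ parameters as $(\mathbf{a}_j,b_j)$, $j=1,\dots,P^{D+1}$, so that $|w^\ast_\lambda(\mathbf{a}_1,b_1)|\ge|w^\ast_\lambda(\mathbf{a}_2,b_2)|\ge\cdots$. The family is of $(\alpha,\beta)$-class: there are constants $\alpha,\beta>0$ such that for all $D$ and $j$, $|P^{-D/2}w^\ast_\lambda(\mathbf{a}_j,b_j)|\le\alpha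 j^{-(1+\beta)}$. For $\Delta>0$, $p^\ast_{\lambda,\Delta}(\mathbf{a},b)=\frac1Z\frac{|P^{-D/2}w^\ast_\lambda(\mathbf{a},b)|^2}{|P^{-D/2}w^\ast_\lambda(\mathbf{a},b)|^2+\Delta}$ with $Z$ the normalizing constant. The $O,\Omega$ constants may depend on $\alpha,\beta$ but not on $D$. *)

From HB Require Import structures.
From mathcomp Require Import all_boot all_order all_algebra.
From mathcomp Require Import all_classical all_reals all_analysis.
Set Implicit Arguments. Unset Strict Implicit. Unset Printing Implicit Defensive.
Import Order.TTheory GRing.Theory Num.Theory.
Local Open Scope ring_scope.

Section Defs.
Variable R : realType.
Variables P D : nat.

(* input space Z_P^D (row vectors over 'Z_P, which is Z/PZ for P prime) *)
Definition vec := 'rV['Z_P]_D.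
Definition param := (vec * 'Z_P)%type.

Definition dotP (a x : vec) : 'Z_P := \sum_i a ord0 i * x ord0 i.

Definition scaleD : R := (Num.sqrt ((P%:R : R) ^+ D))^-1.

Definition node (g : 'Z_P -> R) (t : param) (x : vec) : R := g (dotP t.1 x - t.2).

Definition S (g : 'Z_P -> R) (w : param -> R) (x : vec) : R :=
  scaleD * \sum_t w t * node g t x.

Definition pdata M (xs : 'I_M -> vec) (x : vec) : R :=
  (#|[set m | xs m == x]|)%:R / M%:R.

Definition emp_sqdist M (xs : 'I_M -> vec) (h1 h2 : vec -> R) : R :=
  \sum_x pdata xs x * (h1 x - h2 x) ^+ 2.

Definition ridge_obj (g : 'Z_P -> R) (lam : R) M (xs : 'I_M -> vec)
    (f : vec -> R) (w : param -> R) : R :=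
  emp_sqdist xs f (S g w) + lam * \sum_t (scaleD * w t) ^+ 2.

Definition is_wstar (g : 'Z_P -> R) (lam : R) M (xs : 'I_M -> vec)
    (f : vec -> R) (w : param -> R) : Prop :=
  forall w' : param -> R, ridge_obj g lam xs f w <= ridge_obj g lam xs f w'.

(* (alpha,beta)-class condition on the normalized weights c = P^{-D/2} w*:
   when the parameters are listed as t_1, t_2, ... with |c| nonincreasing,
   |c(t_j)| <= alpha j^{-(1+beta)}  (index j : 'I_n stands for j+1). *)
Definition ab_class (c : param -> R) (alpha beta : R) : Prop :=
  exists s : 'I_#|{: param}| -> param,
    [/\ bijective s,
        (forall i j : 'I_#|{: param}|, (i <= j)%N -> `|c (s j)| <= `|c (s i)|) &
        (forall j : 'I_#|{: param}|,
            `|c (s j)| <= alpha * ((j.+1)%:R `^ (- (1 + beta))))].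

(* p*_{lambda,Delta} built from normalized weights c = P^{-D/2} w* *)
Definition pstar_un (c : param -> R) (Delta : R) (t : param) : R :=
  (c t) ^+ 2 / ((c t) ^+ 2 + Delta).
Definition pstar (c : param -> R) (Delta : R) (t : param) : R :=
  pstar_un c Delta t / \sum_u pstar_un c Delta u.

Definition prob_iid N (p : param -> R) (E : {ffun 'I_N -> param} -> Prop) : R :=
  \sum_(s : {ffun 'I_N -> param}) (\prod_i p (s i)) * (if `[< E s >] then 1 else 0).

Definition sampled N (s : {ffun 'I_N -> param}) : {set param} := [set s i | i : 'I_N].

Definition subnet (g : 'Z_P -> R) (W : {set param}) (v : param -> R) (x : vec) : R :=
  \sum_(t in W) v t * node g t x.

Definition subnet_obj (g : 'Z_P -> R) (lam : R) M (xs : 'I_M -> vec)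
    (f : vec -> R) (W : {set param}) (v : param -> R) : R :=
  emp_sqdist xs f (subnet g W v) + lam * \sum_(t in W) (v t) ^+ 2.

Definition is_trained (g : 'Z_P -> R) (lam : R) M (xs : 'I_M -> vec)
    (f : vec -> R) (W : {set param}) (v : param -> R) : Prop :=
  forall v' : param -> R, subnet_obj g lam xs f W v <= subnet_obj g lam xs f W v'.

End Defs.

From HB Require Import structures.
From mathcomp Require Import all_boot all_order all_algebra.
From mathcomp Require Import all_classical all_reals all_analysis.
From mathcomp Require Import ring lra.
Import Order.TTheory GRing.Theory Num.Theory.
Set Implicit Arguments. Unset Strict Implicit. Unset Printing Implicit Defensive.
Local Open Scope ring_scope.

(* Write c = P^{-D/2} w*.  Since w* minimises a convex quadratic objective, the
   objective of any weights exceeds the optimum by a quadratic form; comparing the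
   trained subnetwork on W with w* restricted to W bounds its empirical error by
   (1 + lam) (sum_{t notin W} |c t|)^2.  With Delta = eps^{1 + 1/beta}, every node with
   c t ^2 >= Delta has unnormalised weight p*_un >= 1/2, and the (alpha, beta) decay gives
   sum_t min(sqrt Delta, |c t|) = O(sqrt eps).  Hence, once all these heavy nodes are
   sampled, the uncovered tail has squared mass O(eps), and the total weight
   Z = sum_t p*_un is O(eps^{-1/(2 beta)}).  Each heavy node is missed by N samples with
   probability at most exp(-N / (2 Z)), and there are at most 2 Z of them, so a union
   bound gives the sample size N = O(eps^{-1/(2 beta)} log (1 / (eps delta))). *)

Lemma ler_sum_term (R : numDomainType) (T : finType) (F : T -> R) i :
  (forall j, 0 <= F j) -> F i <= \sum_j F j.
Proof. by move=> F0; rewrite (bigD1 i) //= lerDl sumr_ge0. Qed.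

Lemma norm_le1_of_sum_sqr1 (R : realDomainType) (T : finType) (F : T -> R) :
  \sum_j F j ^+ 2 = 1 -> forall i, `|F i| <= 1.
Proof.
move=> F1 i; rewrite -(expr_le1 (ltn0Sn 1) (normr_ge0 _)) real_normK ?num_real // -F1.
by apply: ler_sum_term => j; apply: sqr_ge0.
Qed.

Lemma linear_term_eq0 (R : realFieldType) (l q : R) :
  0 <= q -> (forall h, 0 <= h * l + h ^+ 2 * q) -> l = 0.
Proof.
move=> q0 lq; have q1 : q + 1 != 0 by rewrite gt_eqF //; lra.
have := lq (- l / (q + 1)).
have -> : - l / (q + 1) * l + (- l / (q + 1)) ^+ 2 * q = - (l / (q + 1)) ^+ 2.
  by field.
rewrite oppr_ge0 => u0; have : l / (q + 1) == 0 by rewrite -sqrf_eq0 eq_le u0 sqr_ge0.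
by rewrite mulf_eq0 invr_eq0 (negPf q1) orbF => /eqP.
Qed.

Lemma pow1B_le_expR (R : realType) (x : R) (N : nat) :
  0 <= x <= 1 -> (1 - x) ^+ N <= expR (- (N%:R * x)).
Proof.
move=> /andP [x0 x1]; rewrite -mulrN expRM_natl lerXn2r ?nnegrE ?expR_ge0 //; first lra.
by have := expR_ge1Dx (- x); lra.
Qed.

Section RidgeRegression.
Variables (R : realType) (P D : nat) (g : 'Z_P -> R) (lam : R).
Variables (M : nat) (xs : 'I_M -> vec P D) (f : vec P D -> R).
Hypothesis lam_ge0 : 0 <= lam.

Local Notation c := (scaleD R P D).
Local Notation obj := (ridge_obj g lam xs f).

Lemma pdata_ge0 x : 0 <= pdata R xs x.
Proof. by rewrite /pdata divr_ge0. Qed.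

Lemma sum_pdata_le1 : \sum_x pdata R xs x <= 1.
Proof.
rewrite /pdata -mulr_suml -natr_sum.
have -> : (\sum_x #|[set m | xs m == x]|)%N = M.
  rewrite -[RHS]card_ord -sum1_card (partition_big xs predT) //=.
  by apply: eq_bigr => x _; rewrite -sum1_card; apply: eq_bigl => m; rewrite inE.
have [->|M0] := eqVneq M 0%N; first by rewrite mul0r ler01.
by rewrite divff ?pnatr_eq0.
Qed.

Lemma S_affine (a d : param P D -> R) (h : R) x :
  S g (fun t => a t + h * d t) x = S g a x + h * S g d x.
Proof.
rewrite /S [h * (_ * _)]mulrCA -mulrDr [h * _]mulr_sumr -big_split /=; congr (_ * _).
by apply: eq_bigr => t _; ring.
Qed.

Lemma S_sub (a b : param P D -> R) x : S g (fun t => a t - b t) x = S g a x - S g b x.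
Proof.
rewrite /S -mulrBr -sumrB /=; congr (_ * _).
by apply: eq_bigr => t _; ring.
Qed.

Definition ridge_lin (a d : param P D -> R) : R :=
  \sum_x pdata R xs x * (-2 * (f x - S g a x) * S g d x) +
  lam * \sum_t (2 * (c * a t) * (c * d t)).

Definition ridge_quad (d : param P D -> R) : R :=
  \sum_x pdata R xs x * S g d x ^+ 2 + lam * \sum_t (c * d t) ^+ 2.

Lemma ridge_obj_line (a d : param P D -> R) (h : R) :
  obj (fun t => a t + h * d t) = obj a + h * ridge_lin a d + h ^+ 2 * ridge_quad d.
Proof.
rewrite /ridge_obj /ridge_lin /ridge_quad /emp_sqdist.
have -> : \sum_x pdata R xs x * (f x - S g (fun t => a t + h * d t) x) ^+ 2 =
    \sum_x pdata R xs x * (f x - S g a x) ^+ 2 +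
    h * \sum_x pdata R xs x * (-2 * (f x - S g a x) * S g d x) +
    h ^+ 2 * \sum_x pdata R xs x * S g d x ^+ 2.
  by rewrite !mulr_sumr -!big_split /=; apply: eq_bigr => x _; rewrite S_affine; ring.
have -> : \sum_t (c * (a t + h * d t)) ^+ 2 = \sum_t (c * a t) ^+ 2 +
    h * \sum_t (2 * (c * a t) * (c * d t)) + h ^+ 2 * \sum_t (c * d t) ^+ 2.
  by rewrite !mulr_sumr -!big_split /=; apply: eq_bigr => t _; ring.
ring.
Qed.

Lemma ridge_quad_ge0 (d : param P D -> R) : 0 <= ridge_quad d.
Proof.
rewrite /ridge_quad addr_ge0 ?mulr_ge0 ?sumr_ge0 // => [x _|t _].
  by rewrite mulr_ge0 ?pdata_ge0 ?sqr_ge0.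
exact: sqr_ge0.
Qed.

Lemma wstar_lin0 (w d : param P D -> R) : is_wstar g lam xs f w -> ridge_lin w d = 0.
Proof.
move=> wmin; apply: (linear_term_eq0 (ridge_quad_ge0 d)) => h.
by have := wmin (fun t => w t + h * d t); rewrite ridge_obj_line -addrA lerDl.
Qed.

Lemma wstar_obj_excess (w w' : param P D -> R) : is_wstar g lam xs f w ->
  obj w' = obj w + ridge_quad (fun t => w' t - w t).
Proof.
move=> wmin; have -> : w' = (fun t => w t + 1 * (w' t - w t)).
  by apply: boolp.funext => t; ring.
rewrite ridge_obj_line wstar_lin0 // mulr0 expr1n mul1r addr0.
by congr (_ + ridge_quad _); apply: boolp.funext => t; ring.
Qed.

Lemma ridge_quad_le (d : param P D -> R) : (forall b, `|g b| <= 1) ->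
  ridge_quad d <= (1 + lam) * (\sum_t `|c * d t|) ^+ 2.
Proof.
move=> g1; set m := \sum_t `|c * d t|.
have m0 : 0 <= m by rewrite sumr_ge0.
have S_le x : `|S g d x| <= m.
  rewrite /S mulr_sumr; apply: le_trans (ler_norm_sum _ _ _) _.
  apply: ler_sum => t _; rewrite mulrA normrM.
  by rewrite -[leRHS]mulr1 ler_wpM2l //; apply: g1.
have loss_le : \sum_x pdata R xs x * S g d x ^+ 2 <= m ^+ 2.
  apply: le_trans (_ : \sum_x pdata R xs x * m ^+ 2 <= _).
    apply: ler_sum => x _; rewrite ler_wpM2l ?pdata_ge0 // -real_normK ?num_real //.
    by rewrite ler_sqr ?nnegrE ?S_le.
  by rewrite -mulr_suml -[leRHS]mul1r ler_wpM2r ?sqr_ge0 ?sum_pdata_le1.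
have reg_le : \sum_t (c * d t) ^+ 2 <= m ^+ 2.
  rewrite expr2 mulr_suml; apply: ler_sum => t _.
  rewrite -real_normK ?num_real // expr2 ler_wpM2l //.
  by apply: ler_sum_term => u.
rewrite /ridge_quad mulrDl mul1r lerD // ler_wpM2l //.
Qed.

Hypothesis P_gt0 : (0 < P)%N.

Let c_gt0 : 0 < c.
Proof. by rewrite /scaleD invr_gt0 sqrtr_gt0 exprn_gt0 // ltr0n. Qed.

Definition lift_subnet (W : {set param P D}) (v : param P D -> R) (t : param P D) : R :=
  if t \in W then v t / c else 0.

Lemma subnet_lift W v x : subnet g W v x = S g (lift_subnet W v) x.
Proof.
rewrite /subnet /S big_mkcond mulr_sumr; apply: eq_bigr => t _; rewrite /lift_subnet.
by case: ifP => _; [field; rewrite gt_eqF | rewrite !mul0r mulr0].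
Qed.

Lemma subnet_obj_lift W v : subnet_obj g lam xs f W v = obj (lift_subnet W v).
Proof.
rewrite /subnet_obj /ridge_obj /emp_sqdist; congr (_ + _ * _).
  by apply: eq_bigr => x _; rewrite subnet_lift.
rewrite big_mkcond; apply: eq_bigr => t _; rewrite /lift_subnet.
by case: ifP => _; [rewrite mulrCA divff ?gt_eqF ?mulr1 | rewrite mulr0 expr0n].
Qed.

Lemma trained_subnet_err_le (w : param P D -> R) W v :
  (forall b, `|g b| <= 1) -> is_wstar g lam xs f w -> is_trained g lam xs f W v ->
  emp_sqdist xs (S g w) (subnet g W v) <=
  (1 + lam) * (\sum_(t | t \notin W) `|c * w t|) ^+ 2.
Proof.
move=> g1 wmin vmin.
set u := lift_subnet W v; set uw := lift_subnet W (fun t => c * w t).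
have err_le : emp_sqdist xs (S g w) (subnet g W v) <= ridge_quad (fun t => u t - w t).
  have -> : emp_sqdist xs (S g w) (subnet g W v) =
      \sum_x pdata R xs x * S g (fun t => u t - w t) x ^+ 2.
    by apply: eq_bigr => x _; rewrite subnet_lift S_sub; congr (_ * _); ring.
  by rewrite /ridge_quad lerDl mulr_ge0 // sumr_ge0 // => t _; apply: sqr_ge0.
have uw_tail : \sum_t `|c * (uw t - w t)| = \sum_(t | t \notin W) `|c * w t|.
  rewrite [RHS]big_mkcond; apply: eq_bigr => t _; rewrite /uw /lift_subnet.
  case: ifP => _; last by rewrite sub0r mulrN normrN.
  by rewrite [c * w t]mulrC mulfK ?gt_eqF // subrr mulr0 normr0.
(* [v] does at least as well as [w] restricted to [W], and both objectives exceed the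
   optimum [obj w] by the quadratic form [ridge_quad]. *)
have : obj u <= obj uw by rewrite -!subnet_obj_lift; apply: vmin.
rewrite (wstar_obj_excess u wmin) (wstar_obj_excess uw wmin) lerD2l => quad_le.
by apply: le_trans err_le (le_trans quad_le _); rewrite -uw_tail ridge_quad_le.
Qed.

End RidgeRegression.

Section PowerTail.
Variables (R : realType) (b : R).
Hypothesis b_gt0 : 0 < b.

Lemma powR_step_le (x : R) : 0 < x ->
  b * (x + 1) `^ (- (1 + b)) <= x `^ (- b) - (x + 1) `^ (- b).
Proof.
move=> x0; have x1 : 0 < x + 1 by lra.
have ln_gap : (x + 1)^-1 <= ln (x + 1) - ln x.
  suff : ln x - ln (x + 1) <= - (x + 1)^-1 by lra.
  have -> : ln x - ln (x + 1) = ln (1 + - (x + 1)^-1).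
    by rewrite -lnV ?posrE // -lnM ?posrE ?invr_gt0 //; congr ln; field; lra.
  by apply: le_ln1Dx; rewrite ltrN2 invf_lt1 //; lra.
have xE : x `^ (- b) = (x + 1) `^ (- b) * expR (b * (ln (x + 1) - ln x)).
  by rewrite /powR !gt_eqF // -expRD; congr expR; ring.
have x1E : (x + 1) `^ (- (1 + b)) = (x + 1) `^ (- b) * (x + 1)^-1.
  rewrite /powR gt_eqF // -[(x + 1)^-1]lnK ?posrE ?invr_gt0 // lnV ?posrE //.
  by rewrite -expRD; congr expR; ring.
rewrite xE x1E -[X in _ <= _ - X]mulr1 -mulrBr mulrCA ler_wpM2l ?powR_ge0 //.
have := expR_ge1Dx (b * (ln (x + 1) - ln x)).
have := ler_wpM2l (ltW b_gt0) ln_gap; lra.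
Qed.

Lemma sum_powR_tail_le (J n : nat) : (0 < J)%N ->
  \sum_(J <= j < n) (j.+1)%:R `^ (- (1 + b)) <= J%:R `^ (- b) / b.
Proof.
move=> J0; have [nJ|Jn] := leqP n J.
  by rewrite big_geq // divr_ge0 ?powR_ge0 // ltW.
set F := fun j : nat => j%:R `^ (- b) : R.
apply: le_trans (_ : \sum_(J <= j < n) (F j - F j.+1) / b <= _).
  apply: ler_sum_nat => j /andP [Jj _]; rewrite ler_pdivlMr // mulrC /F -natr1.
  by apply: powR_step_le; rewrite ltr0n (leq_trans J0).
rewrite -mulr_suml ler_pM2r ?invr_gt0 //.
rewrite (telescope_sumr_eq (fun j => - F j) _ (ltnW Jn)) => [|j _]; last first.
  by rewrite opprK addrC.
by rewrite opprK addrC lerBlDr lerDl powR_ge0.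
Qed.

Lemma sum_min_le (n : nat) (a : 'I_n -> R) (al th : R) (J : nat) :
  0 <= al -> 0 <= th -> (0 < J)%N ->
  (forall j : 'I_n, a j <= al * (j.+1)%:R `^ (- (1 + b))) ->
  \sum_j Num.min th (a j) <= J%:R * th + al * J%:R `^ (- b) / b.
Proof.
move=> al0 th0 J0 a_le.
pose u k : R := if (k < J)%N then th else al * (k.+1)%:R `^ (- (1 + b)).
have u0 k : 0 <= u k by rewrite /u; case: ifP => // _; rewrite mulr_ge0 ?powR_ge0.
apply: le_trans (_ : \sum_(0 <= k < maxn n J) u k <= _).
  apply: le_trans (_ : \sum_(0 <= k < n) u k <= _).
    rewrite big_mkord; apply: ler_sum => j _; rewrite /u.
    by case: ifP => _; [rewrite ge_min lexx | rewrite ge_min a_le orbT].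
  by rewrite (big_cat_nat _ (leq_maxl n J)) //= lerDl sumr_ge0.
rewrite (big_cat_nat _ (leq_maxr n J)) //= -mulrA lerD //.
  rewrite (eq_big_nat _ _ (F2 := fun=> th)) => [|k /andP [_ kJ]]; last by rewrite /u kJ.
  by rewrite sumr_const_nat subn0 mulr_natl.
rewrite (eq_big_nat _ _ (F2 := fun k => al * (k.+1)%:R `^ (- (1 + b)))); last first.
  by move=> k /andP [Jk _]; rewrite /u ltnNge Jk.
by rewrite -mulr_sumr ler_wpM2l // sum_powR_tail_le.
Qed.

Lemma ab_class_sum_min_le P D (c : param P D -> R) (al th : R) (J : nat) :
  ab_class c al b -> 0 <= al -> 0 <= th -> (0 < J)%N ->
  \sum_t Num.min th `|c t| <= J%:R * th + al * J%:R `^ (- b) / b.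
Proof.
move=> [s [s_bij _ s_le]] al0 th0 J0.
rewrite (reindex s) /=; last exact: onW_bij.
exact: (sum_min_le (a := fun j => `|c (s j)|)).
Qed.

Lemma ab_class_sum_le P D (c : param P D -> R) (al : R) :
  ab_class c al b -> 0 <= al -> \sum_t `|c t| <= al + al / b.
Proof.
move=> abc al0; have c_le t : `|c t| <= al.
  case: (abc) => s [[s' ss' s's] _ s_le]; rewrite -[t]s's.
  apply: le_trans (s_le _) _; rewrite -[leRHS]mulr1 ler_wpM2l //.
  rewrite -[leRHS](powRr0 (s' t).+1%:R); apply: ler_powR; rewrite ?ler1n //.
  by rewrite oppr_le0 addr_ge0 // ltW.
under eq_bigr => t _ do rewrite -(min_idPr (c_le t)).
apply: le_trans (ab_class_sum_min_le abc al0 al0 (ltn0Sn 0)) _.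
by rewrite powR1 mul1r mulr1.
Qed.

End PowerTail.

Lemma sum_pow1B_lt (R : realType) (T : finType) (p : T -> R) (I : {pred T})
    (Z Q delta : R) (N : nat) :
  0 < Z -> (forall t, 0 <= p t <= 1) -> (forall t, t \in I -> (2 * Z)^-1 <= p t) ->
  #|I|%:R <= 2 * Z -> 2 * Z <= Q -> 0 < delta -> Q * ln (Q / delta) < N%:R ->
  \sum_(t in I) (1 - p t) ^+ N < delta.
Proof.
move=> Z0 p01 pI cardI ZQ delta0 N_gt; have Q0 : 0 < Q by lra.
have miss_sum : \sum_(t in I) (1 - p t) ^+ N <= #|I|%:R * expR (- (N%:R / (2 * Z))).
  rewrite mulr_natl -sumr_const; apply: ler_sum => t tI.
  by apply: le_trans (pow1B_le_expR _ (p01 t)) _; rewrite ler_expR lerN2 ler_wpM2l ?pI.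
have card_exp : #|I|%:R * expR (- (N%:R / (2 * Z))) <= Q * expR (- (N%:R / Q)).
  apply: ler_pM; rewrite ?ler0n ?expR_ge0 ?(le_trans cardI) //.
  by rewrite ler_expR lerN2 ler_wpM2l // lef_pV2 ?posrE ?mulr_gt0.
apply: le_lt_trans (le_trans miss_sum card_exp) _.
have : expR (- (N%:R / Q)) < delta / Q.
  rewrite -[delta / Q]lnK ?posrE ?divr_gt0 // ltr_expR.
  rewrite -[delta / Q]invf_div lnV ?posrE ?divr_gt0 //.
  by rewrite ltrN2 ltr_pdivlMr // mulrC.
by rewrite ltr_pdivlMr // [_ * Q]mulrC.
Qed.

Section IidSampling.
Variables (R : realType) (P D : nat).
Implicit Types (p : param P D -> R) (I : {pred param P D}).

Local Notation indicator b := (if b then 1 else 0 : R).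

Lemma prob_iid_nil p (E : {ffun 'I_0 -> param P D} -> Prop) :
  (forall s, E s) -> prob_iid p E = 1.
Proof.
move=> allE; rewrite /prob_iid (big_pred1 [ffun=> (0, 0)]) => [|s]; last first.
  by apply/esym/eqP/ffunP => -[].
by rewrite big_ord0 mul1r asboolT.
Qed.

Lemma prob_iid_total N p : \sum_t p t = 1 ->
  \sum_(s : {ffun 'I_N -> param P D}) \prod_i p (s i) = 1.
Proof.
by move=> p1; rewrite -(bigA_distr_bigA (fun _ => p)) /= p1 prodr_const expr1n.
Qed.

Lemma prob_iid_miss N p t : \sum_u p u = 1 ->
  prob_iid p (fun s : {ffun 'I_N -> param P D} => t \notin sampled s) = (1 - p t) ^+ N.
Proof.
move=> p1; rewrite /prob_iid.
have miss1 : \sum_u p u * (u != t)%:R = 1 - p t.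
  rewrite -[in RHS]p1 (bigD1 t) //= eqxx mulr0 add0r [X in X - _](bigD1 t) //=.
  rewrite addrAC subrr add0r.
  by apply: eq_bigr => u ->; rewrite mulr1.
have -> : (1 - p t) ^+ N = \prod_(i < N) \sum_u p u * (u != t)%:R.
  by rewrite prodr_const card_ord miss1.
rewrite (bigA_distr_bigA (fun _ u => p u * (u != t)%:R)) /=.
apply: eq_bigr => s _; rewrite big_split /= asboolb; congr (_ * _).
case: (boolP (t \in sampled s)) => [/imsetP [i _ ->] | tS].
  by rewrite (bigD1 i) //= eqxx mul0r.
rewrite /= big1 // => i _; suff -> : s i != t by [].
by apply: contraNneq tS => <-; apply: imset_f.
Qed.

Lemma prob_iid_cover_ge N p I (E : {ffun 'I_N -> param P D} -> Prop) :
  (forall t, 0 <= p t) -> \sum_t p t = 1 -> (forall s, I \subset sampled s -> E s) ->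
  1 - \sum_(t in I) (1 - p t) ^+ N <= prob_iid p E.
Proof.
move=> p0 p1 coverE.
under eq_bigr => t _ do rewrite -(prob_iid_miss N t p1).
rewrite -(prob_iid_total N p1) /prob_iid exchange_big -sumrB /=.
apply: ler_sum => s _; rewrite -mulr_sumr -[X in X - _]mulr1 -mulrBr.
rewrite ler_wpM2l ?prodr_ge0 //.
have ind_ge0 (b : bool) : 0 <= indicator b by case: b.
have [/coverE Es | /subsetPn [t tI tS]] := boolP (I \subset sampled s).
  by rewrite asboolT // lerBlDr lerDl sumr_ge0.
rewrite (bigD1 t) //= asboolT // opprD addrA subrr sub0r.
by apply: le_trans (ind_ge0 _); rewrite oppr_le0 sumr_ge0.
Qed.

Lemma prob_iid_cover_gt (pu : param P D -> R) I
    (E : forall N, {ffun 'I_N -> param P D} -> Prop) (Q delta : R) :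
  (forall t, 0 <= pu t) -> (forall t, t \in I -> 1 / 2 <= pu t) ->
  2 * \sum_t pu t <= Q -> 1 <= Q -> 0 < delta < 1 ->
  (forall N s, I \subset sampled s -> E N s) ->
  exists N : nat, N%:R <= Q * ln (Q / delta) + 1 /\
    1 - delta < prob_iid (fun t => pu t / \sum_u pu u) (E N).
Proof.
move=> pu0 puI ZQ Q1 /andP [delta0 delta1] coverE; set Z := \sum_u pu u.
have pu_le t : pu t <= Z by apply: ler_sum_term.
have lnQ0 : 0 <= ln (Q / delta).
  by apply: ln_ge0; rewrite ler_pdivlMr // mul1r; lra.
have [Z0 | Z0] := lerP Z 0.
  (* then [I] is empty, so the empty sample covers it *)
  exists 0%N; split; first by rewrite addr_ge0 ?mulr_ge0 //; lra.
  rewrite prob_iid_nil; first lra.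
  move=> s; apply: coverE; apply/fintype.subsetP => t tI.
  by have := puI t tI; have := pu_le t; lra.
pose N := (Num.truncn (Q * ln (Q / delta))).+1.
have /andP [N_le N_gt] :=
  archimedean.Num.Theory.truncn_itv (mulr_ge0 (le_trans ler01 Q1) lnQ0).
exists N; split; first by rewrite -natr1 lerD2r.
have p1 : \sum_t pu t / Z = 1 by rewrite -mulr_suml divff ?gt_eqF.
apply: lt_le_trans (prob_iid_cover_ge _ p1 (coverE N)) => [|t]; last first.
  by rewrite divr_ge0 // ltW.
rewrite ltrD2l ltrN2; apply: (sum_pow1B_lt (Q := Q) Z0) => // [t | t tI |].
- by rewrite divr_ge0 ?ler_pdivrMr ?mul1r ?pu_le // ltW.
- by rewrite invfM ler_pdivlMr // -mulrA mulVf ?gt_eqF // mulr1; have := puI t tI; lra.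
- rewrite -sum1_card natr_sum.
  apply: le_trans (_ : \sum_(t in I) 2 * pu t <= _); first by apply: ler_sum => t /puI; lra.
  by rewrite -mulr_sumr ler_wpM2l // big_mkcond; apply: ler_sum => t _; case: ifP.
Qed.

End IidSampling.

Section ImportanceWeights.
Variables (R : realType) (P D : nat) (c : param P D -> R).

Lemma pstar_un_ge0 Delta t : 0 <= Delta -> 0 <= pstar_un c Delta t.
Proof. by move=> Delta0; rewrite divr_ge0 ?addr_ge0 ?sqr_ge0. Qed.

Lemma pstar_un_ge_half Delta t :
  0 < Delta -> Delta <= c t ^+ 2 -> 1 / 2 <= pstar_un c Delta t.
Proof.
move=> Delta0 big_t; have den0 : 0 < c t ^+ 2 + Delta by rewrite ltr_wpDl ?sqr_ge0.
by rewrite /pstar_un ler_pdivlMr //; lra.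
Qed.

Lemma pstar_un_le_min th t : 0 < th -> pstar_un c (th ^+ 2) t <= Num.min th `|c t| / th.
Proof.
move=> th0; rewrite /pstar_un -real_normK ?num_real //; set x := `|c t|.
have x0 : 0 <= x by apply: normr_ge0.
have den0 : 0 < x ^+ 2 + th ^+ 2 by rewrite ltr_wpDl ?sqr_ge0 ?exprn_gt0.
have [th_le | x_lt] := lerP th x.
  by rewrite divff ?gt_eqF // ler_pdivrMr // mul1r lerDl sqr_ge0.
rewrite ler_pdivrMr // mulrAC ler_pdivlMr //.
(* x^2 - x th + th^2 = (x - th/2)^2 + 3 th^2 / 4 *)
have : 0 <= x * (x ^+ 2 - x * th + th ^+ 2) by apply: mulr_ge0 => //; nra.
nra.
Qed.

Lemma sum_uncovered_le_min (th : R) (W : {set param P D}) : 0 <= th ->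
  [pred t | th ^+ 2 <= c t ^+ 2] \subset W ->
  \sum_(t | t \notin W) `|c t| <= \sum_t Num.min th `|c t|.
Proof.
move=> th0 /fintype.subsetP covW; rewrite big_mkcond; apply: ler_sum => t _.
case: ifPn => [tW | _]; last by rewrite le_min normr_ge0 andbT.
have : t \notin [pred t | th ^+ 2 <= c t ^+ 2] by apply: contra tW => /covW.
rewrite inE -ltNge -real_normK ?num_real // ltr_sqr ?nnegrE // => /ltW c_le.
by rewrite (min_idPr c_le).
Qed.

End ImportanceWeights.

Definition tail_const (R : realType) (alpha beta : R) : R := 2 + alpha / beta.
Definition mass_const (R : realType) (alpha beta : R) : R := alpha + alpha / beta.
Definition size_const (R : realType) (alpha beta : R) : R :=
  2 * tail_const alpha beta * (ln (2 * tail_const alpha beta) + (2 * beta)^-1 + 1) + 1.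
Definition error_const (R : realType) (lam alpha beta : R) : R :=
  (1 + lam) * (tail_const alpha beta ^+ 2 + expR 1 * mass_const alpha beta ^+ 2).

Section PruningRates.
Variables (R : realType) (alpha beta eps : R).
Hypotheses (alpha_gt0 : 0 < alpha) (beta_gt0 : 0 < beta).
Hypotheses (eps_gt0 : 0 < eps) (eps_lt1 : eps < 1).

Local Notation C1 := (tail_const alpha beta).

Lemma tail_const_ge2 : 2 <= C1.
Proof. by rewrite lerDl divr_ge0 // ltW. Qed.

Lemma size_const_gt0 : 0 < size_const alpha beta.
Proof.
have C1_ge2 := tail_const_ge2; have : 0 <= ln (2 * C1) by apply: ln_ge0; lra.
have : 0 < (2 * beta)^-1 by rewrite invr_gt0 mulr_gt0.
by rewrite /size_const; nra.
Qed.

Lemma error_const_gt0 (lam : R) : 0 <= lam -> 0 < error_const lam alpha beta.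
Proof.
move=> lam0; have C1_ge2 := tail_const_ge2.
have : 0 <= expR 1 * mass_const alpha beta ^+ 2 by rewrite mulr_ge0 ?sqr_ge0 ?expR_ge0.
by rewrite /error_const; nra.
Qed.

(* [K] is the scale of the sample size and [Delta = th ^+ 2] the weight threshold above
   which a node must be sampled. *)
Local Notation K := (eps `^ (- (2 * beta)^-1)).
Local Notation th := (eps `^ ((1 + beta^-1) / 2)).
Local Notation Delta := (eps `^ (1 + beta^-1)).

Lemma scale_ge1 : 1 <= K.
Proof.
rewrite -[leLHS](powRr0 eps); apply: ger_powR; first by rewrite eps_gt0 ltW.
by rewrite oppr_le0 invr_ge0 mulr_ge0 // ltW.
Qed.

Lemma thresh_sqr : th ^+ 2 = Delta.
Proof. by rewrite -powR_mulrn ?powR_ge0 // -powRrM divfK ?pnatr_eq0. Qed.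

Lemma scale_mul_thresh : K * th = Num.sqrt eps.
Proof.
rewrite -powRD; last by apply/implyP => _; rewrite gt_eqF.
rewrite -powR12_sqrt ?ltW //.
by congr (_ `^ _); field; rewrite gt_eqF.
Qed.

Lemma powR_scale_le (x : R) : K <= x -> x `^ (- beta) <= Num.sqrt eps.
Proof.
move=> Kx; have K0 : 0 < K by apply: lt_le_trans scale_ge1.
have x0 : 0 < x by apply: lt_le_trans Kx.
have <- : K `^ (- beta) = Num.sqrt eps.
  by rewrite -powRrM -powR12_sqrt ?ltW //; congr (_ `^ _); field; rewrite gt_eqF.
rewrite (powRN x) (powRN K) lef_pV2 ?posrE ?powR_gt0 //.
by apply: (ge0_ler_powR (ltW beta_gt0)) Kx; rewrite nnegrE ltW.
Qed.

Lemma ab_class_sum_min_thresh_le P D (c : param P D -> R) : ab_class c alpha beta ->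
  \sum_t Num.min th `|c t| <= C1 * Num.sqrt eps.
Proof.
move=> abc; have K0 : 0 <= K by apply: powR_ge0.
pose J := (Num.truncn K).+1.
have /andP [J_le K_lt] := archimedean.Num.Theory.truncn_itv K0.
apply: le_trans
  (ab_class_sum_min_le beta_gt0 (J := J) abc (ltW alpha_gt0) (powR_ge0 _ _) isT) _.
have head_le : J%:R * th <= 2 * Num.sqrt eps.
  rewrite -scale_mul_thresh mulrA ler_wpM2r ?powR_ge0 // /J -natr1.
  by have := scale_ge1; lra.
have tail_le : alpha * J%:R `^ (- beta) / beta <= alpha / beta * Num.sqrt eps.
  by rewrite mulrAC ler_wpM2l ?powR_scale_le ?(ltW K_lt) // divr_ge0 // ltW.
by rewrite [in leRHS]mulrDl; lra.
Qed.

Lemma pstar_mass_le P D (c : param P D -> R) : ab_class c alpha beta ->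
  2 * \sum_t pstar_un c Delta t <= 2 * C1 * K.
Proof.
move=> abc; have th0 : 0 < th by apply: powR_gt0.
rewrite -mulrA ler_pM2l // -thresh_sqr.
apply: le_trans (_ : \sum_t Num.min th `|c t| / th <= _).
  by apply: ler_sum => t _; apply: pstar_un_le_min.
by rewrite -mulr_suml ler_pdivrMr // -mulrA scale_mul_thresh ab_class_sum_min_thresh_le.
Qed.

Lemma uncovered_sqr_le P D (c : param P D -> R) (W : {set param P D}) :
  ab_class c alpha beta -> [pred t | Delta <= c t ^+ 2] \subset W ->
  (\sum_(t | t \notin W) `|c t|) ^+ 2 <= C1 ^+ 2 * eps.
Proof.
rewrite -thresh_sqr => abc /(sum_uncovered_le_min (powR_ge0 _ _)) uncov_le.
rewrite -[in leRHS](sqr_sqrtr (ltW eps_gt0)) -exprMn ler_sqr ?nnegrE ?sumr_ge0 //.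
  exact: le_trans uncov_le (ab_class_sum_min_thresh_le abc).
by rewrite mulr_ge0 ?sqrtr_ge0 // addr_ge0 // divr_ge0 // ltW.
Qed.

Lemma sample_scale_ge1 : 1 <= 2 * C1 * K.
Proof. by have := scale_ge1; have := tail_const_ge2; nra. Qed.

Lemma sample_size_ge0 (delta : R) : 0 < delta < 1 ->
  0 <= size_const alpha beta * K * ln ((eps * delta)^-1).
Proof.
move=> /andP [delta0 delta1]; rewrite !mulr_ge0 ?powR_ge0 ?(ltW size_const_gt0) //.
by apply: ln_ge0; rewrite invf_ge1 ?mulr_gt0 // mulr_ile1 ?ltW.
Qed.

Lemma sample_size_le (delta : R) : 0 < delta < 1 -> 1 <= ln ((eps * delta)^-1) ->
  2 * C1 * K * ln (2 * C1 * K / delta) + 1 <=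
  size_const alpha beta * K * ln ((eps * delta)^-1).
Proof.
move=> /andP [delta0 delta1]; set L := ln _ => L1.
have C1_ge2 := tail_const_ge2; have C1_gt0 : 0 < C1 by lra.
have K1 := scale_ge1; have K0 : 0 < K by lra.
have lneps : ln eps < 0 by rewrite ln_lt0 ?eps_gt0.
have lndelta : ln delta < 0 by rewrite ln_lt0 ?delta0.
have LE : L = - ln eps - ln delta by rewrite /L lnV ?posrE ?mulr_gt0 // lnM ?opprD.
have lnQ : ln (2 * C1 * K / delta) = ln (2 * C1) - (2 * beta)^-1 * ln eps - ln delta.
  rewrite lnM ?posrE ?mulr_gt0 ?invr_gt0 // lnM ?posrE ?mulr_gt0 // ln_powR lnV ?posrE //.
  by rewrite mulNr.
have lnC1 : 0 <= ln (2 * C1) by apply: ln_ge0; lra.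
have ib0 : 0 < (2 * beta)^-1 by rewrite invr_gt0 mulr_gt0.
have lnQ_le : ln (2 * C1 * K / delta) <= (ln (2 * C1) + (2 * beta)^-1 + 1) * L.
  have -> : (ln (2 * C1) + (2 * beta)^-1 + 1) * L =
      ln (2 * C1) * L + (2 * beta)^-1 * L + L by ring.
  have := ler_wpM2l lnC1 L1.
  have : (2 * beta)^-1 * - ln eps <= (2 * beta)^-1 * L by rewrite ler_wpM2l ?ltW //; lra.
  rewrite lnQ mulrN mulr1; lra.
have KL1 : 1 <= K * L by have := ler_pM ler01 ler01 K1 L1; rewrite mul1r.
have := ler_wpM2l (ltW (mulr_gt0 (mulr_gt0 (ltr0n _ 2) C1_gt0) K0)) lnQ_le.
rewrite /size_const; have -> : (2 * C1 * (ln (2 * C1) + (2 * beta)^-1 + 1) + 1) * K * L =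
    2 * C1 * K * ((ln (2 * C1) + (2 * beta)^-1 + 1) * L) + K * L by ring.
lra.
Qed.

Lemma expR1_eps_ge1 (delta : R) : 0 < delta < 1 -> ln ((eps * delta)^-1) < 1 ->
  1 <= expR 1 * eps.
Proof.
move=> /andP [delta0 delta1]; rewrite lnV ?posrE ?mulr_gt0 // lnM ?posrE // => L_lt1.
have : ln delta < 0 by rewrite ln_lt0 ?delta0.
rewrite -[eps](lnK eps_gt0) -expRD -[leLHS]expR0 ler_expR; lra.
Qed.

End PruningRates.

Section PruningGuarantee.
Variables (R : realType) (lam alpha beta eps : R) (P D M : nat) (g : 'Z_P -> R).
Variables (xs : 'I_M -> vec P D) (f : vec P D -> R) (w : param P D -> R).
Hypotheses (lam_gt0 : 0 < lam) (alpha_gt0 : 0 < alpha) (beta_gt0 : 0 < beta).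
Hypotheses (eps_gt0 : 0 < eps) (eps_lt1 : eps < 1).
Hypotheses (P_gt0 : (0 < P)%N) (g_le1 : forall b, `|g b| <= 1).
Hypotheses (wmin : is_wstar g lam xs f w).
Hypothesis abc : ab_class (fun t => scaleD R P D * w t) alpha beta.

Local Notation c := (fun t => scaleD R P D * w t).
Local Notation err W v := (emp_sqdist xs (S g w) (subnet g W v)).

Lemma pruned_err_le (W : {set param P D}) (v : param P D -> R) :
  is_trained g lam xs f W v ->
  (\sum_(t | t \notin W) `|c t|) ^+ 2 <=
    (tail_const alpha beta ^+ 2 + expR 1 * mass_const alpha beta ^+ 2) * eps ->
  err W v <= error_const lam alpha beta * eps.
Proof.
move=> vmin uncov; have lam0 : 0 <= lam by apply: ltW.
rewrite /error_const -mulrA.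
apply: le_trans (trained_subnet_err_le lam0 P_gt0 g_le1 wmin vmin) _.
by rewrite ler_wpM2l // addr_ge0.
Qed.

Lemma pruned_err_le_cover N (s : {ffun 'I_N -> param P D}) :
  [pred t | eps `^ (1 + beta^-1) <= c t ^+ 2] \subset sampled s ->
  forall v, is_trained g lam xs f (sampled s) v ->
  err (sampled s) v <= error_const lam alpha beta * eps.
Proof.
move=> covW v /pruned_err_le; apply.
have := uncovered_sqr_le alpha_gt0 beta_gt0 eps_gt0 eps_lt1 abc covW.
have eB0 : 0 <= expR 1 * mass_const alpha beta ^+ 2 by rewrite mulr_ge0 ?expR_ge0 ?sqr_ge0.
have := mulr_ge0 eB0 (ltW eps_gt0).
by rewrite mulrDl; lra.
Qed.

Lemma pruned_err_le_large_eps (W : {set param P D}) (v : param P D -> R) :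
  1 <= expR 1 * eps -> is_trained g lam xs f W v ->
  err W v <= error_const lam alpha beta * eps.
Proof.
move=> eps_large /pruned_err_le; apply.
have B0 : 0 <= mass_const alpha beta by rewrite addr_ge0 ?divr_ge0 ?ltW.
have : \sum_(t | t \notin W) `|c t| <= mass_const alpha beta.
  apply: le_trans (ab_class_sum_le beta_gt0 abc (ltW alpha_gt0)).
  by rewrite [leRHS](bigID (fun t => t \notin W)) /= lerDl sumr_ge0.
rewrite -ler_sqr ?nnegrE ?sumr_ge0 // => uncov.
have : mass_const alpha beta ^+ 2 <= expR 1 * mass_const alpha beta ^+ 2 * eps.
  by rewrite mulrAC -[leLHS]mul1r ler_wpM2r ?sqr_ge0.
have : 0 <= tail_const alpha beta ^+ 2 * eps by rewrite mulr_ge0 ?sqr_ge0 ?ltW.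
by rewrite mulrDl; lra.
Qed.

End PruningGuarantee.

Theorem theorem5 (R : realType) (lam alpha beta : R) :
  0 < lam -> 0 < alpha -> 0 < beta ->
  exists cD cN cE : R, [/\ 0 < cD, 0 < cN, 0 < cE &
  forall (P : nat) (g : 'Z_P -> R), prime P ->
    \sum_b g b = 0 -> \sum_b g b ^+ 2 = 1 ->
  forall (D M : nat) (xs : 'I_M -> vec P D) (f : vec P D -> R)
         (wstar : param P D -> R),
    (0 < D)%N ->
    is_wstar g lam xs f wstar ->
    ab_class (fun t => scaleD R P D * wstar t) alpha beta ->
  forall eps delta : R, 0 < eps < 1 -> 0 < delta < 1 ->
  exists (Delta : R) (N : nat),
    [/\ 0 < Delta,
        cD * eps `^ (1 + beta^-1) <= Delta,
        N%:R <= cN * eps `^ (- (2 * beta)^-1) * ln ((eps * delta)^-1) &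
        1 - delta <
        prob_iid (pstar (fun t => scaleD R P D * wstar t) Delta)
          (fun s : {ffun 'I_N -> param P D} => forall v : param P D -> R,
             is_trained g lam xs f (sampled s) v ->
             emp_sqdist xs (S g wstar) (subnet g (sampled s) v) <= cE * eps)]].
Proof.
move=> lam0 alpha0 beta0.
exists 1, (size_const alpha beta), (error_const lam alpha beta).
split; rewrite ?size_const_gt0 ?error_const_gt0 ?ltW //.
move=> P g /prime_gt0 P0 _ /norm_le1_of_sum_sqr1 g1 D M xs f w _ wmin abc eps delta.
move=> /andP [eps0 eps1] delta01; exists (eps `^ (1 + beta^-1)); rewrite mul1r.
have [L_lt1 | L_ge1] := ltrP (ln ((eps * delta)^-1)) 1.
  exists 0%N; split; rewrite ?powR_gt0 ?sample_size_ge0 //.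
  have eps_large := expR1_eps_ge1 eps0 delta01 L_lt1.
  rewrite prob_iid_nil => [|s v]; first by case/andP: delta01 => delta0 _; lra.
  by apply: pruned_err_le_large_eps.
have [N [N_le N_prob]] := prob_iid_cover_gt
  (fun t => pstar_un_ge0 _ t (powR_ge0 eps _))
  (fun t => pstar_un_ge_half (powR_gt0 _ eps0))
  (pstar_mass_le alpha0 beta0 eps0 eps1 abc)
  (sample_scale_ge1 alpha0 beta0 eps0 eps1) delta01
  (pruned_err_le_cover lam0 alpha0 beta0 eps0 eps1 P0 g1 wmin abc).
exists N; split; rewrite ?powR_gt0 //.
exact: le_trans N_le (sample_size_le alpha0 beta0 eps0 eps1 delta01 L_ge1).
Qed.
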